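(* Let $n\ge 1$, $\nu>0$, let $M\in\mathbb{R}^{n\times n}$ be diagonal with positive diagonal entries, let $L\in\mathbb{R}^{n\times n}$ be nonsingular, and let $\Pi_k$ be an $n\times n$ diagonal matrix with diagonal entries in $\{0,1\}$. For $\alpha_u,\alpha_y\ge0$ with $\max\{\alpha_u,\alpha_y\}>0$ set $\gamma_1=\frac{\alpha_y^2\nu}{\alpha_y^2\nu+\alpha_u^2}$, $\gamma_2=\frac{\alpha_u^2}{\alpha_y^2\nu+\alpha_u^2}$, $$\mathbb{S}_k=\nu LM^{-1}L^T+M-\frac{1}{\alpha_y^2\nu+\alpha_u^2}(\alpha_y\nu LM^{-1}-\alpha_u I)\Pi_k M\Pi_k(\alpha_y\nu LM^{-1}-\alpha_u I)^T,$$ $L_1=\sqrt{\nu}L(I-\gamma_1\Pi_k)^{1/2}+(I-\gamma_2\Pi_k)^{1/2}M$, $\widehat{\mathbb{S}}_k=L_1M^{-1}L_1^T$, assumed nonsingular. Let $\lambda$ be an eigenvalue of $\widehat{\mathbb{S}}_k^{-1}\mathbb{S}_k$. Then in the two cases below $$\lambda\le\zeta^2+(1+\zeta)^2,$$ where: (i) if $(\alpha_u,\alpha_y)=(1,0)$, then $\zeta=\big\|M^{1/2}\big(\sqrt{\nu}L+M(I-\Pi_k)\big)^{-1}\sqrt{\nu}LM^{-1/2}\big\|$; moreover, if $L+L^T$ is positive definite, then (with $M,L,\Pi_k$ fixed) $\zeta$ is bounded, as $\nu\to0$, by a constant independent of $\nu$; (ii) if $(\alpha_u,\alpha_y)=(0,1)$,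 then $\zeta=\big\|\big(I+\sqrt{\nu}M^{-1/2}LM^{-1/2}(I-\Pi_k)\big)^{-1}\big\|$; moreover $\zeta\to1$ as $\nu\to0$.
   Context: $\|\cdot\|$ is the spectral norm. Square roots of nonnegative diagonal matrices are taken entrywise. Case (i) corresponds to control constraints and case (ii) to state constraints. *)

From HB Require Import structures.
From mathcomp Require Import all_boot all_order all_algebra.
From mathcomp Require Import all_classical all_reals all_analysis.
Set Implicit Arguments. Unset Strict Implicit. Unset Printing Implicit Defensive.
Import Order.TTheory GRing.Theory Num.Theory.
Local Open Scope ring_scope.
Local Open Scope classical_set_scope.

Section Defs.
Variable R : realType.
Variable n : nat.

Definition vnorm (x : 'cV[R]_n) : R := Num.sqrt (\sum_i (x i 0) ^+ 2).

Definition spnorm (A : 'M[R]_n) : R :=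
  sup [set vnorm (A *m x) | x in [set x : 'cV[R]_n | vnorm x <= 1]].

(* entrywise square root; for nonnegative diagonal matrices this is the
   matrix square root *)
Definition msqrt (A : 'M[R]_n) : 'M[R]_n := \matrix_(i, j) Num.sqrt (A i j).

Definition posdef (A : 'M[R]_n) : Prop :=
  forall x : 'cV[R]_n, x != 0 -> 0 < (x^T *m A *m x) 0 0.

Definition gamma1 (nu au ay : R) : R := ay ^+ 2 * nu / (ay ^+ 2 * nu + au ^+ 2).
Definition gamma2 (nu au ay : R) : R := au ^+ 2 / (ay ^+ 2 * nu + au ^+ 2).

Definition Sk (nu : R) (M L Pi : 'M[R]_n) (au ay : R) : 'M[R]_n :=
  let B := (ay * nu) *: (L *m invmx M) - au%:M in
  nu *: (L *m invmx M *m L^T) + M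
  - (ay ^+ 2 * nu + au ^+ 2)^-1 *: (B *m Pi *m M *m Pi *m B^T).

Definition L1 (nu : R) (M L Pi : 'M[R]_n) (au ay : R) : 'M[R]_n :=
  Num.sqrt nu *: L *m msqrt (1%:M - gamma1 nu au ay *: Pi)
  + msqrt (1%:M - gamma2 nu au ay *: Pi) *m M.

Definition Shat (nu : R) (M L Pi : 'M[R]_n) (au ay : R) : 'M[R]_n :=
  L1 nu M L Pi au ay *m invmx M *m (L1 nu M L Pi au ay)^T.

Definition zeta1 (nu : R) (M L Pi : 'M[R]_n) : R :=
  spnorm (msqrt M *m invmx (Num.sqrt nu *: L + M *m (1%:M - Pi))
          *m (Num.sqrt nu *: L) *m invmx (msqrt M)).

Definition zeta2 (nu : R) (M L Pi : 'M[R]_n) : R :=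
  spnorm (invmx (1%:M + Num.sqrt nu *: (invmx (msqrt M) *m L *m invmx (msqrt M))
                       *m (1%:M - Pi))).
End Defs.

From HB Require Import structures.
From mathcomp Require Import all_boot all_order all_algebra.
From mathcomp Require Import all_classical all_reals all_analysis.
From mathcomp Require Import ring lra.
Import Order.TTheory GRing.Theory Num.Theory.
Import numFieldNormedType.Exports.
Local Open Scope ring_scope.
Local Open Scope classical_set_scope.

(* Write M = diag m, Pi = diag p and P := L1 M^(-1/2).  In both cases P = A + C with
   Shat = P P^T, Sk = A A^T + C C^T and zeta = |P^-1 A|: in case (i) A = sqrt(nu) L M^(-1/2)
   and C = (I - Pi) M^(1/2), in case (ii) A = M^(1/2) and C = sqrt(nu) L (I - Pi) M^(-1/2);
   these identities only use that Pi and I - Pi are complementary 0/1 diagonal matrices.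
   If x is an eigenvector of (P P^T)^-1 (A A^T + C C^T), put y = P^T x and
   a = A^T x = (P^-1 A)^T y; then lam |y|^2 = |a|^2 + |y - a|^2 <= (zeta^2 + (1 + zeta)^2) |y|^2.

   For the behaviour as nu -> 0 in case (i), write (s L + D)^-1 s L w = w - z with s = sqrt(nu),
   D = M (I - Pi) and (s L + D) z = D w.  Positivity of L + L^T gives the energy estimate
   |D^(1/2) z| <= |D^(1/2) w|, which bounds (I - Pi) z, and Pi L z = 0 then bounds Pi z through
   the invertible matrix Pi L Pi + I - Pi, uniformly in s.  In case (ii), |(I + sqrt(nu) G)^-1|
   lies between (1 + sqrt(nu) |G|)^-1 and (1 - sqrt(nu) |G|)^-1. *)

Set Implicit Arguments. Unset Strict Implicit. Unset Printing Implicit Defensive.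

Section EuclideanNorm.
Variables (R : realType) (n : nat).
Implicit Types (x y z : 'cV[R]_n) (A : 'M[R]_n).

Definition dot x y : R := (x^T *m y) 0 0.

Lemma dotE x y : dot x y = \sum_i x i 0 * y i 0.
Proof. by rewrite /dot mxE; apply: eq_bigr => i _; rewrite mxE. Qed.

Lemma dotC x y : dot x y = dot y x.
Proof. by rewrite !dotE; apply: eq_bigr => i _; rewrite mulrC. Qed.

Lemma dotDl x y z : dot (x + y) z = dot x z + dot y z.
Proof. by rewrite /dot linearD /= mulmxDl mxE. Qed.

Lemma dotZl (c : R) x y : dot (c *: x) y = c * dot x y.
Proof. by rewrite /dot linearZ /= -scalemxAl mxE. Qed.

Lemma dotNl x y : dot (- x) y = - dot x y.
Proof. by rewrite -scaleN1r dotZl mulN1r. Qed.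

Lemma dotDr x y z : dot x (y + z) = dot x y + dot x z.
Proof. by rewrite dotC dotDl !(dotC x). Qed.

Lemma dotZr (c : R) x y : dot x (c *: y) = c * dot x y.
Proof. by rewrite dotC dotZl dotC. Qed.

Lemma dotNr x y : dot x (- y) = - dot x y.
Proof. by rewrite dotC dotNl dotC. Qed.

Lemma dot0l y : dot 0 y = 0.
Proof. by rewrite -(scale0r 0) dotZl mul0r. Qed.

Lemma dot0r x : dot x 0 = 0.
Proof. by rewrite dotC dot0l. Qed.

Lemma dot_mulmxl A x y : dot (A *m x) y = dot x (A^T *m y).
Proof. by rewrite /dot trmx_mul mulmxA. Qed.

Lemma dot_self_ge0 x : 0 <= dot x x.
Proof. by rewrite dotE sumr_ge0 // => i _; rewrite -expr2 sqr_ge0. Qed.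

Lemma dot_self_eq0 x : dot x x = 0 -> x = 0.
Proof.
rewrite dotE => x0; apply/matrixP => i j; rewrite (ord1 j) mxE; apply/eqP.
rewrite -sqrf_eq0 expr2; apply/eqP.
by apply: (psumr_eq0P _ x0) => // k _; rewrite -expr2 sqr_ge0.
Qed.

Lemma sqr_vnorm x : vnorm x ^+ 2 = dot x x.
Proof.
rewrite /vnorm sqr_sqrtr; last by rewrite sumr_ge0 // => i _; rewrite sqr_ge0.
by rewrite dotE; apply: eq_bigr => i _; rewrite expr2.
Qed.

Lemma vnorm_ge0 x : 0 <= vnorm x.
Proof. exact: sqrtr_ge0. Qed.

Lemma vnorm0 : vnorm (0 : 'cV[R]_n) = 0.
Proof. by rewrite /vnorm big1 ?sqrtr0 // => i _; rewrite mxE expr0n. Qed.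

Lemma vnorm_eq0 x : vnorm x = 0 -> x = 0.
Proof. by move=> x0; apply: dot_self_eq0; rewrite -sqr_vnorm x0 expr0n. Qed.

Lemma vnorm_gt0 x : x != 0 -> 0 < vnorm x.
Proof. by move=> x0; rewrite lt_def vnorm_ge0 andbT; apply: contraNneq x0 => /vnorm_eq0 ->. Qed.

Lemma cauchy_schwarz x y : dot x y <= vnorm x * vnorm y.
Proof.
have [/vnorm_eq0 ->|/eqP x0] := eqVneq (vnorm x) 0; first by rewrite dot0l vnorm0 mul0r.
have [/vnorm_eq0 ->|/eqP y0] := eqVneq (vnorm y) 0; first by rewrite dot0r vnorm0 mulr0.
have xy_gt0 : 0 < vnorm x * vnorm y by rewrite mulr_gt0 // lt_def vnorm_ge0 andbT; apply/eqP.
have := dot_self_ge0 (vnorm y *: x - vnorm x *: y).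
rewrite !(dotDl, dotDr, dotNl, dotNr, dotZl, dotZr) (dotC y x) -!sqr_vnorm; nra.
Qed.

Lemma vnormD x y : vnorm (x + y) <= vnorm x + vnorm y.
Proof.
rewrite -ler_sqr ?nnegrE ?addr_ge0 ?vnorm_ge0 // sqr_vnorm dotDl !dotDr (dotC y x).
by rewrite -!sqr_vnorm; have := cauchy_schwarz x y; nra.
Qed.

Lemma vnormZ (c : R) x : vnorm (c *: x) = `|c| * vnorm x.
Proof.
rewrite /vnorm (eq_bigr (fun i => c ^+ 2 * x i 0 ^+ 2)) => [|i _]; last by rewrite mxE exprMn.
by rewrite -mulr_sumr sqrtrM ?sqr_ge0 // sqrtr_sqr.
Qed.

Lemma vnormN x : vnorm (- x) = vnorm x.
Proof. by rewrite -scaleN1r vnormZ normrN normr1 mul1r. Qed.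

Lemma vnormB x y : vnorm (x - y) <= vnorm x + vnorm y.
Proof. by rewrite -(vnormN y) vnormD. Qed.

Lemma vnorm_delta (i : 'I_n) : vnorm (delta_mx i 0 : 'cV[R]_n) = 1.
Proof.
rewrite /vnorm (bigD1 i) //= big1 => [|j /negPf ji]; last by rewrite mxE ji expr0n.
by rewrite mxE !eqxx expr1n addr0 sqrtr1.
Qed.

Lemma abs_entry_le_vnorm x i : `|x i 0| <= vnorm x.
Proof.
rewrite -sqrtr_sqr ler_sqrt ?sumr_ge0 // => [|j _]; last by rewrite sqr_ge0.
by rewrite (bigD1 i) //= lerDl sumr_ge0 // => j _; rewrite sqr_ge0.
Qed.

Lemma vnorm_mulmx_bounded A :
  exists k, 0 <= k /\ forall x, vnorm (A *m x) <= k * vnorm x.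
Proof.
set S := \sum_i \sum_j `|A i j|.
have S_ge0 : 0 <= S by rewrite !sumr_ge0 // => i _; rewrite sumr_ge0.
exists (Num.sqrt n%:R * S); split=> [|x]; first by rewrite mulr_ge0 ?sqrtr_ge0.
have Sx_ge0 : 0 <= S * vnorm x by rewrite mulr_ge0 ?vnorm_ge0.
have entry_le i : `|(A *m x) i 0| <= S * vnorm x.
  rewrite mxE; apply: le_trans (ler_norm_sum _ _ _) _.
  apply: (@le_trans _ _ (\sum_j `|A i j| * vnorm x)).
    by apply: ler_sum => j _; rewrite normrM ler_wpM2l ?abs_entry_le_vnorm.
  rewrite -mulr_suml ler_wpM2r ?vnorm_ge0 // /S [leRHS](bigD1 i) //= lerDl.
  by rewrite sumr_ge0 // => k _; rewrite sumr_ge0.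
have -> : Num.sqrt n%:R * S * vnorm x = Num.sqrt (n%:R * (S * vnorm x) ^+ 2).
  by rewrite sqrtrM ?ler0n // sqrtr_sqr ger0_norm // mulrA.
rewrite {1}/vnorm ler_sqrt; last by rewrite mulr_ge0 ?ler0n ?sqr_ge0.
apply: (@le_trans _ _ (\sum_(i < n) (S * vnorm x) ^+ 2)); last first.
  by rewrite sumr_const card_ord mulr_natl.
apply: ler_sum => i _.
by rewrite -real_normK ?num_real // ler_sqr ?nnegrE.
Qed.
End EuclideanNorm.

Section SpectralNorm.
Variables (R : realType) (n : nat).
Implicit Types (x y : 'cV[R]_n) (A : 'M[R]_n).

Lemma spnorm_image_bounded A :
  has_ubound [set vnorm (A *m x) | x in [set x : 'cV[R]_n | vnorm x <= 1]].
Proof.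
have [k [k_ge0 Ak]] := vnorm_mulmx_bounded A.
exists k => _ [x /= x_le1 <-]; apply: le_trans (Ak x) _.
by rewrite -[leRHS]mulr1 ler_wpM2l.
Qed.

Lemma vnorm_mulmx_le_spnorm A x : vnorm x <= 1 -> vnorm (A *m x) <= spnorm A.
Proof. by move=> x_le1; apply: (ub_le_sup (spnorm_image_bounded A)); exists x. Qed.

Lemma spnorm_ge0 A : 0 <= spnorm A.
Proof. by rewrite -(vnorm0 R n) -{1}(mulmx0 _ A) vnorm_mulmx_le_spnorm ?vnorm0. Qed.

Lemma vnorm_mulmx_le A x : vnorm (A *m x) <= spnorm A * vnorm x.
Proof.
have [/vnorm_eq0 ->|x_neq0] := eqVneq (vnorm x) 0; first by rewrite mulmx0 vnorm0 mulr0.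
have x_gt0 : 0 < vnorm x by rewrite lt_def x_neq0 vnorm_ge0.
have := vnorm_mulmx_le_spnorm A (x := (vnorm x)^-1 *: x).
rewrite -scalemxAr !vnormZ ger0_norm ?invr_ge0 ?vnorm_ge0 // mulVf // lexx => /(_ isT).
by rewrite -(ler_pM2l x_gt0) mulrA mulfV // mul1r mulrC.
Qed.

Lemma spnorm_le A c :
  0 <= c -> (forall x, vnorm (A *m x) <= c * vnorm x) -> spnorm A <= c.
Proof.
move=> c_ge0 Ac; apply: ge_sup; first by exists (vnorm (A *m 0)), 0; rewrite //= vnorm0.
by move=> _ [x /= x_le1 <-]; apply: le_trans (Ac x) _; rewrite -[leRHS]mulr1 ler_wpM2l.
Qed.

Lemma vnorm_trmx_mulmx_le A y : vnorm (A^T *m y) <= spnorm A * vnorm y.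
Proof.
set a := A^T *m y.
have : vnorm a ^+ 2 <= spnorm A * vnorm y * vnorm a.
  rewrite sqr_vnorm {1}/a dot_mulmxl trmxK dotC.
  apply: le_trans (cauchy_schwarz _ _) _.
  by rewrite mulrAC ler_wpM2r ?vnorm_ge0 ?vnorm_mulmx_le.
have := vnorm_ge0 a; have : 0 <= spnorm A * vnorm y by rewrite mulr_ge0 ?spnorm_ge0 ?vnorm_ge0.
move: (spnorm A * vnorm y) (vnorm a) => b c; nra.
Qed.

End SpectralNorm.

Section MatrixInverse.
Variables (F : fieldType) (n : nat).
Implicit Types (A B S : 'M[F]_n).

Lemma invmx_uniq A B : A *m B = 1%:M -> invmx A = B.
Proof.
move=> AB; have [uA _] := mulmx1_unit AB.
by rewrite -[invmx A]mulmx1 -AB mulmxA mulVmx // mul1mx.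
Qed.

Lemma invmxM A B : A \in unitmx -> B \in unitmx -> invmx (A *m B) = invmx B *m invmx A.
Proof.
by move=> uA uB; apply: invmx_uniq; rewrite -mulmxA (mulmxA B) mulmxV // mul1mx mulmxV.
Qed.

Lemma unitmx_ker0 A : (forall x : 'cV[F]_n, A *m x = 0 -> x = 0) -> A \in unitmx.
Proof.
move=> ker0; rewrite -unitmx_tr -row_free_unit; apply: inj_row_free => v vA0.
have /ker0 vT0 : A *m v^T = 0 by rewrite -(trmxK (A *m v^T)) trmx_mul trmxK vA0 linear0.
by rewrite -(trmxK v) vT0 linear0.
Qed.

Lemma eigenvalue_invmx_mulmx_quad B S lam :
  B \in unitmx -> eigenvalue (invmx B *m S) lam ->
  exists2 x : 'cV[F]_n, x != 0 & (x^T *m S *m x) 0 0 = lam * (x^T *m B *m x) 0 0.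
Proof.
move=> uB /eigenvalueP[v vBS v0].
have vE : v = (v *m invmx B) *m B by rewrite mulmxKV.
exists (v *m invmx B)^T.
  by apply: contraNneq v0 => /(congr1 trmx); rewrite trmxK trmx0 => vB0; rewrite vE vB0 mul0mx.
by rewrite trmxK -(mulmxA v) vBS mulmxKV // -scalemxAl mxE.
Qed.

End MatrixInverse.

Section GramSplitting.
Variables (R : realType) (n : nat).
Implicit Types (A C : 'M[R]_n).

Lemma quad_gram A (x : 'cV[R]_n) : (x^T *m (A *m A^T) *m x) 0 0 = vnorm (A^T *m x) ^+ 2.
Proof. by rewrite sqr_vnorm /dot trmx_mul trmxK !mulmxA. Qed.

Lemma eigenvalue_gram_split_le A C lam :
  (A + C) *m (A + C)^T \in unitmx ->
  eigenvalue (invmx ((A + C) *m (A + C)^T) *m (A *m A^T + C *m C^T)) lam ->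
  lam <= spnorm (invmx (A + C) *m A) ^+ 2 + (1 + spnorm (invmx (A + C) *m A)) ^+ 2.
Proof.
set P := A + C; set z := spnorm _ => uPP /(eigenvalue_invmx_mulmx_quad uPP)[x x0].
have uP : P \in unitmx by move: uPP; rewrite unitmx_mul => /andP[].
rewrite mulmxDr mulmxDl mxE !quad_gram.
set a := A^T *m x; set c := C^T *m x; set y := P^T *m x => quadE.
have a_le : vnorm a <= z * vnorm y.
  have -> : a = (invmx P *m A)^T *m y.
    by rewrite /y trmx_mul -mulmxA (mulmxA _ P^T) -trmx_mul mulmxV ?trmx1 ?mul1mx.
  exact: vnorm_trmx_mulmx_le.
have c_le : vnorm c <= vnorm y + vnorm a.
  have -> : c = y - a by rewrite /y /P linearD mulmxDl addrC addKr.
  exact: vnormB.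
have y_gt0 : 0 < vnorm y.
  apply: vnorm_gt0; apply: contraNneq x0 => y0.
  by rewrite -(mulKmx (_ : P^T \in unitmx) x) ?unitmx_tr // -/y y0 mulmx0.
rewrite -(ler_pM2r (exprn_gt0 2 y_gt0)) -quadE.
have := vnorm_ge0 a; have := vnorm_ge0 c; have := spnorm_ge0 (invmx P *m A).
rewrite -/z; move: a_le c_le y_gt0; move: (vnorm a) (vnorm c) (vnorm y) z => va vc vy zz; nra.
Qed.

End GramSplitting.

Section DiagonalMatrices.
Variables (R : realType) (n : nat).
Implicit Types (f g : 'I_n -> R) (A : 'M[R]_n).

Definition diagf f : 'M[R]_n := diag_mx (\row_i f i).

Lemma diagfE f i j : diagf f i j = f i *+ (i == j).
Proof. by rewrite !mxE. Qed.

Lemma eq_diagf f g : f =1 g -> diagf f = diagf g.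
Proof. by move=> fg; apply/matrixP => i j; rewrite !diagfE fg. Qed.

Lemma diag_mx_diagf A : is_diag_mx A -> A = diagf (fun i => A i i).
Proof.
move/is_diag_mxP => Adiag; apply/matrixP => i j; rewrite diagfE.
by have [->|/Adiag ->] := eqVneq i j; rewrite ?mulr1n ?mulr0n.
Qed.

Lemma diagfM f g : diagf f *m diagf g = diagf (fun i => f i * g i).
Proof. by rewrite mulmx_diag; congr diag_mx; apply/matrixP => i j; rewrite !mxE. Qed.

Lemma diagfC f g : diagf f *m diagf g = diagf g *m diagf f.
Proof. by rewrite !diagfM; apply: eq_diagf => i; rewrite mulrC. Qed.

Lemma diagfMA f g A : diagf f *m (diagf g *m A) = diagf (fun i => f i * g i) *m A.
Proof. by rewrite mulmxA diagfM. Qed.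

Lemma tr_diagf f : (diagf f)^T = diagf f.
Proof. exact: tr_diag_mx. Qed.

Lemma diagf1 : diagf (fun=> 1) = 1%:M.
Proof. by apply/matrixP => i j; rewrite diagfE mxE. Qed.

Lemma diagfD f g : diagf f + diagf g = diagf (fun i => f i + g i).
Proof. by apply/matrixP => i j; rewrite !mxE mulrnDl. Qed.

Lemma diagfN f : - diagf f = diagf (fun i => - f i).
Proof. by apply/matrixP => i j; rewrite !mxE mulNrn. Qed.

Lemma one_sub_diagf f : 1%:M - diagf f = diagf (fun i => 1 - f i).
Proof. by rewrite -diagf1 diagfN diagfD. Qed.

Lemma msqrt_diagf f : msqrt (diagf f) = diagf (fun i => Num.sqrt (f i)).
Proof. by apply/matrixP => i j; rewrite !mxE; case: (i == j); rewrite ?sqrtr0. Qed.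

Lemma invmx_diagf f : (forall i, f i != 0) -> invmx (diagf f) = diagf (fun i => (f i)^-1).
Proof.
by move=> f_neq0; apply: invmx_uniq; rewrite diagfM -diagf1; apply: eq_diagf => i; rewrite mulfV.
Qed.

Lemma unitmx_diagf f : (forall i, f i != 0) -> diagf f \in unitmx.
Proof.
move=> f_neq0; have : diagf f *m diagf (fun i => (f i)^-1) = 1%:M.
  by rewrite diagfM -diagf1; apply: eq_diagf => i; rewrite mulfV.
by case/mulmx1_unit.
Qed.

End DiagonalMatrices.

Section ZeroOneDiagonal.
Variables (R : realType) (n : nat) (p : 'I_n -> R).
Hypothesis p01 : forall i, p i = 0 \/ p i = 1.

Let Pi := diagf p.
Let Q := diagf (fun i => 1 - p i).

Lemma sqrt_one_sub01 i : Num.sqrt (1 - p i) = 1 - p i.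
Proof. by case: (p01 i) => ->; rewrite ?subr0 ?subrr ?sqrtr1 ?sqrtr0. Qed.

Lemma one_sub01_ge0 i : 0 <= 1 - p i.
Proof. by case: (p01 i) => ->; rewrite ?subr0 ?subrr ?ler01. Qed.

Lemma diagf01_idem : Pi *m Pi = Pi.
Proof. by rewrite diagfM; apply: eq_diagf => i; case: (p01 i) => ->; rewrite ?mulr0 ?mulr1. Qed.

Lemma diagf01_compl_idem : Q *m Q = Q.
Proof.
by rewrite diagfM; apply: eq_diagf => i; case: (p01 i) => ->; rewrite ?subr0 ?subrr ?mulr0 ?mulr1.
Qed.

Lemma diagf01_compl_mul : Q *m Pi = 0.
Proof.
rewrite diagfM (eq_diagf (g := fun=> 0)) => [|i].
  by apply/matrixP => i j; rewrite diagfE !mxE mul0rn.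
by case: (p01 i) => ->; rewrite ?mulr0 ?subrr ?mul0r.
Qed.

Lemma diagf01_mul_compl : Pi *m Q = 0.
Proof. by rewrite /Pi /Q diagfC diagf01_compl_mul. Qed.

End ZeroOneDiagonal.

Section Factorizations.
Variables (R : realType) (n : nat) (nu : R) (m p : 'I_n -> R) (L : 'M[R]_n).
Hypotheses (nu_gt0 : 0 < nu) (m_gt0 : forall i, 0 < m i).
Hypothesis p01 : forall i, p i = 0 \/ p i = 1.

Let s := Num.sqrt nu.
Let M := diagf m.
Let Pi := diagf p.
Let Q := diagf (fun i => 1 - p i).
Let Mh := diagf (fun i => Num.sqrt (m i)).
Let Mih := diagf (fun i => (Num.sqrt (m i))^-1).

Lemma sqrt_nu_sqr : s * s = nu.
Proof. by rewrite -expr2 sqr_sqrtr // ltW. Qed.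

Lemma sqrt_m_neq0 i : Num.sqrt (m i) != 0.
Proof. by rewrite sqrtr_eq0 -ltNge. Qed.

Lemma sqrt_m_sqr i : Num.sqrt (m i) * Num.sqrt (m i) = m i.
Proof. by rewrite -expr2 sqr_sqrtr // ltW. Qed.

Lemma invmx_Mh : invmx Mh = Mih.
Proof. by rewrite invmx_diagf //; exact: sqrt_m_neq0. Qed.

Lemma invmx_Mih : invmx Mih = Mh.
Proof. by rewrite -invmx_Mh invmxK. Qed.

Lemma Mh_unit : Mh \in unitmx.
Proof. by apply: unitmx_diagf; exact: sqrt_m_neq0. Qed.

Lemma Mih_unit : Mih \in unitmx.
Proof. by apply: unitmx_diagf => i; rewrite invr_eq0 sqrt_m_neq0. Qed.

Lemma Mh_Mih : Mh *m Mih = 1%:M.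
Proof. by rewrite -invmx_Mh mulmxV ?Mh_unit. Qed.

Lemma M_Mih : M *m Mih = Mh.
Proof.
rewrite diagfM; apply: eq_diagf => i.
by rewrite -{1}sqrt_m_sqr -mulrA mulfV ?sqrt_m_neq0 ?mulr1.
Qed.

Lemma invmx_M : invmx M = Mih *m Mih.
Proof.
rewrite diagfM invmx_diagf => [|i]; last by rewrite gt_eqF.
by apply: eq_diagf => i; rewrite -invfM sqrt_m_sqr.
Qed.

Lemma gram_invmx_M (K : 'M[R]_n) : K *m invmx M *m K^T = (K *m Mih) *m (K *m Mih)^T.
Proof. by rewrite invmx_M trmx_mul tr_diagf !mulmxA. Qed.

Lemma msqrt_one_subZ0 : msqrt (1%:M - 0 *: Pi) = 1%:M.
Proof. by rewrite scale0r subr0 -diagf1 msqrt_diagf; apply: eq_diagf => i; rewrite sqrtr1. Qed.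

Lemma msqrt_one_subZ1 : msqrt (1%:M - 1 *: Pi) = Q.
Proof.
rewrite scale1r one_sub_diagf msqrt_diagf.
by apply: eq_diagf => i; exact: sqrt_one_sub01.
Qed.

Let A1 := s *: L *m Mih.
Let C1 := Q *m Mh.

Lemma L1_case1 : L1 nu M L Pi 1 0 = s *: L + Q *m M.
Proof.
rewrite /L1 /gamma1 /gamma2 expr0n /= !mul0r expr1n add0r divr1.
by rewrite msqrt_one_subZ0 msqrt_one_subZ1 mulmx1.
Qed.

Lemma L1_case1_Mih : L1 nu M L Pi 1 0 *m Mih = A1 + C1.
Proof. by rewrite L1_case1 mulmxDl -mulmxA M_Mih. Qed.

Lemma Shat_case1 : Shat nu M L Pi 1 0 = (A1 + C1) *m (A1 + C1)^T.
Proof. by rewrite /Shat gram_invmx_M L1_case1_Mih. Qed.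

Lemma Sk_case1 : Sk nu M L Pi 1 0 = A1 *m A1^T + C1 *m C1^T.
Proof.
rewrite /Sk expr0n /= !mul0r scale0r sub0r expr1n add0r invr1 scale1r.
rewrite mulNmx mul1mx linearN /= tr_scalar_mx mulmxN mulmx1 !mulNmx opprK.
rewrite -addrA; congr (_ + _).
  by rewrite gram_invmx_M /A1 -scalemxAl linearZ /= -scalemxAr -scalemxAl scalerA sqrt_nu_sqr.
rewrite /C1 trmx_mul !tr_diagf !diagfM diagfN diagfD; apply: eq_diagf => i.
set r := Num.sqrt (m i); rewrite -(sqrt_m_sqr i) -/r.
by case: (p01 i) => ->; ring.
Qed.
Lemma zeta1_case1 : A1 + C1 \in unitmx -> zeta1 nu M L Pi = spnorm (invmx (A1 + C1) *m A1).
Proof.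
rewrite -L1_case1_Mih L1_case1 unitmx_mul => /andP[uN _].
rewrite invmxM ?Mih_unit // invmx_Mih /zeta1 msqrt_diagf invmx_Mh one_sub_diagf diagfC.
by rewrite /A1 !mulmxA.
Qed.

Lemma eigenvalue_case1 : Shat nu M L Pi 1 0 \in unitmx -> forall lam,
  eigenvalue (invmx (Shat nu M L Pi 1 0) *m Sk nu M L Pi 1 0) lam ->
  lam <= zeta1 nu M L Pi ^+ 2 + (1 + zeta1 nu M L Pi) ^+ 2.
Proof.
rewrite Shat_case1 Sk_case1 => uS lam /(eigenvalue_gram_split_le uS).
by move: uS; rewrite unitmx_mul => /andP[/zeta1_case1 ->].
Qed.

Let A2 := Mh.
Let C2 := s *: L *m Q *m Mih.

Lemma L1_case2 : L1 nu M L Pi 0 1 = s *: L *m Q + M.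
Proof.
rewrite /L1 /gamma1 /gamma2 expr0n expr1n /= mul1r addr0 mul0r divff ?gt_eqF //.
by rewrite msqrt_one_subZ1 msqrt_one_subZ0 mul1mx.
Qed.

Lemma L1_case2_Mih : L1 nu M L Pi 0 1 *m Mih = A2 + C2.
Proof. by rewrite L1_case2 mulmxDl M_Mih addrC. Qed.

Lemma Shat_case2 : Shat nu M L Pi 0 1 = (A2 + C2) *m (A2 + C2)^T.
Proof. by rewrite /Shat gram_invmx_M L1_case2_Mih. Qed.

Lemma Sk_case2 : Sk nu M L Pi 0 1 = A2 *m A2^T + C2 *m C2^T.
Proof.
rewrite /Sk expr0n expr1n /= !mul1r addr0 raddf0 subr0 invmx_diagf => [|i]; last by rewrite gt_eqF.
set X := L *m diagf (fun i => (m i)^-1).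
have Pi_term : (nu *: X) *m Pi *m M *m Pi *m (nu *: X)^T =
    (nu * nu) *: (L *m diagf (fun i => (m i)^-1 * p i * m i * p i * (m i)^-1) *m L^T).
  rewrite linearZ /= -!scalemxAl -scalemxAr scalerA /X trmx_mul tr_diagf !mulmxA.
  by rewrite -!mulmxA !diagfMA.
have C2_term : C2 *m C2^T = nu *: (L *m diagf (fun i =>
    (1 - p i) * (Num.sqrt (m i))^-1 * (Num.sqrt (m i))^-1 * (1 - p i)) *m L^T).
  rewrite /C2 -!scalemxAl linearZ /= -scalemxAr scalerA sqrt_nu_sqr !trmx_mul !tr_diagf !mulmxA.
  by rewrite -!mulmxA !diagfMA.
rewrite Pi_term C2_term scalerA mulrA mulVf ?gt_eqF // mul1r tr_diagf diagfM addrAC [RHS]addrC.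
congr (_ + _); last by apply: eq_diagf => i; rewrite sqrt_m_sqr.
rewrite /X -scalerBr -mulmxBl -mulmxBr diagfN diagfD; congr (_ *: (_ *m _ *m _)).
apply: eq_diagf => i; set r := Num.sqrt (m i); rewrite -(sqrt_m_sqr i) -/r.
by have r_neq0 : r != 0 := sqrt_m_neq0 i; case: (p01 i) => ->; field.
Qed.

Lemma A2_C2_factor : A2 + C2 = Mh *m (1%:M + s *: (Mih *m L *m Mih) *m Q).
Proof.
rewrite mulmxDr mulmx1 /C2 -!scalemxAl -scalemxAr; congr (_ + _ *: _).
by rewrite !mulmxA Mh_Mih mul1mx -!mulmxA diagfC.
Qed.

Lemma zeta2_case2 : A2 + C2 \in unitmx -> zeta2 nu M L Pi = spnorm (invmx (A2 + C2) *m A2).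
Proof.
rewrite A2_C2_factor unitmx_mul => /andP[_ uE].
by rewrite invmxM ?Mh_unit // mulmxKV ?Mh_unit // /zeta2 msqrt_diagf invmx_Mh one_sub_diagf.
Qed.

Lemma eigenvalue_case2 : Shat nu M L Pi 0 1 \in unitmx -> forall lam,
  eigenvalue (invmx (Shat nu M L Pi 0 1) *m Sk nu M L Pi 0 1) lam ->
  lam <= zeta2 nu M L Pi ^+ 2 + (1 + zeta2 nu M L Pi) ^+ 2.
Proof.
rewrite Shat_case2 Sk_case2 => uS lam /(eigenvalue_gram_split_le uS).
by move: uS; rewrite unitmx_mul => /andP[/zeta2_case2 ->].
Qed.

End Factorizations.

Section ZetaOneBounded.
Variables (R : realType) (n : nat) (m p : 'I_n -> R) (L : 'M[R]_n).
Hypotheses (m_gt0 : forall i, 0 < m i) (p01 : forall i, p i = 0 \/ p i = 1).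
Hypothesis L_posdef : posdef (L + L^T).
Implicit Types (w x z : 'cV[R]_n).

Let Pi := diagf p.
Let Q := diagf (fun i => 1 - p i).
Let D := Q *m diagf m.
Let Dh := diagf (fun i => Num.sqrt ((1 - p i) * m i)).
Let G := Pi *m L *m Pi + Q.

Lemma dot_mulmx_gt0 x : x != 0 -> 0 < dot x (L *m x).
Proof.
move=> /L_posdef; rewrite -mulmxA -/(dot _ _) mulmxDl dotDr -dot_mulmxl (dotC (L *m x)).
lra.
Qed.

Lemma dot_mulmx_ge0 x : 0 <= dot x (L *m x).
Proof. by have [->|/dot_mulmx_gt0/ltW //] := eqVneq x 0; rewrite dot0l. Qed.

Lemma dot_mulmx_eq0 x : dot x (L *m x) = 0 -> x = 0.
Proof. by move=> Lx0; apply: contra_eq Lx0 => /dot_mulmx_gt0/gt_eqF/negbT. Qed.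

Lemma Dh_sqr : Dh *m Dh = D.
Proof.
rewrite /D !diagfM; apply: eq_diagf => i.
by rewrite -expr2 sqr_sqrtr // mulr_ge0 ?one_sub01_ge0 // ltW.
Qed.

Lemma dot_mulmx_D x y : dot x (D *m y) = dot (Dh *m x) (Dh *m y).
Proof. by rewrite dot_mulmxl tr_diagf mulmxA Dh_sqr. Qed.

Lemma Pi_D : Pi *m D = 0.
Proof. by rewrite mulmxA diagf01_mul_compl // mul0mx. Qed.

Lemma shifted_unitmx s : 0 < s -> s *: L + D \in unitmx.
Proof.
move=> s_gt0; apply: unitmx_ker0 => y Ny0.
have : dot y ((s *: L + D) *m y) = 0 by rewrite Ny0 dot0r.
rewrite mulmxDl dotDr -scalemxAl dotZr dot_mulmx_D.
have := dot_mulmx_ge0 y; have := dot_self_ge0 (Dh *m y) => h1 h2 h3.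
by apply: dot_mulmx_eq0; nra.
Qed.

Lemma Pi_block_unitmx : G \in unitmx.
Proof.
apply: unitmx_ker0 => y Gy0.
have Qy0 : Q *m y = 0.
  have : Q *m (G *m y) = 0 by rewrite Gy0 mulmx0.
  by rewrite mulmxA mulmxDr diagf01_compl_idem // !mulmxA diagf01_compl_mul // !mul0mx add0r.
have PiLPiy0 : Pi *m L *m Pi *m y = 0.
  have : Pi *m (G *m y) = 0 by rewrite Gy0 mulmx0.
  by rewrite mulmxA mulmxDr diagf01_mul_compl // addr0 !mulmxA diagf01_idem.
have yE : y = Pi *m y by rewrite -{1}(mul1mx y) -(subrK Pi 1%:M) one_sub_diagf mulmxDl Qy0 add0r.
apply: dot_mulmx_eq0.
by rewrite {1 2}yE mulmxA (dot_mulmxl Pi) tr_diagf !mulmxA PiLPiy0 dot0r.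
Qed.

Lemma shifted_energy s w z : 0 < s -> (s *: L + D) *m z = D *m w ->
  vnorm (Dh *m z) <= vnorm (Dh *m w).
Proof.
move=> s_gt0 Nz; have : dot z ((s *: L + D) *m z) = dot z (D *m w) by rewrite Nz.
rewrite mulmxDl dotDr -scalemxAl dotZr !dot_mulmx_D -sqr_vnorm.
have := cauchy_schwarz (Dh *m z) (Dh *m w).
have : 0 <= s * dot z (L *m z) by rewrite mulr_ge0 ?dot_mulmx_ge0 // ltW.
have := vnorm_ge0 (Dh *m z); have := vnorm_ge0 (Dh *m w).
move: (vnorm (Dh *m z)) (vnorm (Dh *m w)) => a b; nra.
Qed.

Lemma shifted_Pi_L_ker s w z : 0 < s -> (s *: L + D) *m z = D *m w -> Pi *m L *m z = 0.
Proof.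
move=> s_gt0 Nz; have : Pi *m ((s *: L + D) *m z) = 0 by rewrite Nz mulmxA Pi_D mul0mx.
rewrite mulmxDl mulmxDr -scalemxAl -scalemxAr (mulmxA Pi D) Pi_D mul0mx addr0 mulmxA.
by move/eqP; rewrite scaler_eq0 gt_eqF //= => /eqP.
Qed.

Lemma Q_Pi_split z : z = Q *m z + Pi *m z.
Proof. by rewrite -mulmxDl /Q -one_sub_diagf subrK mul1mx. Qed.

Lemma vnorm_Pi_le z : Pi *m L *m z = 0 ->
  vnorm (Pi *m z) <= spnorm (invmx G *m Pi *m L) * vnorm (Q *m z).
Proof.
move=> PiLz0.
have zE := Q_Pi_split z.
have G_Piz : G *m (Pi *m z) = - (Pi *m L *m (Q *m z)).
  apply/eqP; rewrite -addr_eq0 mulmxDl (mulmxA Q) diagf01_compl_mul // mul0mx addr0.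
  rewrite -(mulmxA (Pi *m L)) (mulmxA Pi Pi) diagf01_idem // -mulmxDr [Pi *m z + _]addrC -zE.
  by rewrite PiLz0.
have -> : Pi *m z = - (invmx G *m Pi *m L *m (Q *m z)).
  by rewrite -(mulKmx Pi_block_unitmx (Pi *m z)) G_Piz mulmxN !mulmxA.
by rewrite vnormN vnorm_mulmx_le.
Qed.

Lemma Q_Dh_factor : Q = diagf (fun i => (1 - p i) / Num.sqrt (m i)) *m Dh.
Proof.
rewrite diagfM; apply: eq_diagf => i; case: (p01 i) => ->; rewrite ?subrr ?mul0r //.
by rewrite subr0 mul1r mul1r mulVf // sqrtr_eq0 -ltNge.
Qed.

Lemma shifted_resolvent_bounded : exists C, 0 <= C /\ forall s, 0 < s -> forall w,
  vnorm (invmx (s *: L + D) *m (s *: L *m w)) <= C * vnorm w.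
Proof.
set kQ := spnorm (diagf (fun i => (1 - p i) / Num.sqrt (m i))).
set kG := spnorm (invmx G *m Pi *m L); set kD := spnorm Dh.
have kQD_ge0 : 0 <= kQ * kD by rewrite mulr_ge0 ?spnorm_ge0.
have kG1_ge0 : 0 <= 1 + kG by rewrite addr_ge0 ?spnorm_ge0.
exists (1 + (1 + kG) * (kQ * kD)); split=> [|s s_gt0 w].
  by rewrite addr_ge0 ?ler01 // mulr_ge0.
set z := invmx (s *: L + D) *m (D *m w).
have Nz : (s *: L + D) *m z = D *m w by rewrite mulKVmx ?shifted_unitmx.
have -> : invmx (s *: L + D) *m (s *: L *m w) = w - z.
  by rewrite -[s *: L *m w](addrK (D *m w)) -mulmxDl mulmxBr mulKmx ?shifted_unitmx.
have Qz_le : vnorm (Q *m z) <= kQ * kD * vnorm w.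
  rewrite Q_Dh_factor -mulmxA -mulrA; apply: le_trans (vnorm_mulmx_le _ _) _.
  rewrite ler_wpM2l ?spnorm_ge0 //; apply: le_trans (shifted_energy s_gt0 Nz) _.
  exact: vnorm_mulmx_le.
have Piz_le := vnorm_Pi_le (shifted_Pi_L_ker s_gt0 Nz).
have z_le : vnorm z <= (1 + kG) * (kQ * kD) * vnorm w.
  rewrite {1}(Q_Pi_split z) -mulrA; apply: le_trans (vnormD _ _) _.
  apply: le_trans (ler_wpM2l kG1_ge0 Qz_le).
  by rewrite mulrDl mul1r lerD2l.
by apply: le_trans (vnormB _ _) _; rewrite mulrDl mul1r lerD2l.
Qed.

Lemma zeta1_bounded : exists C, forall nu, 0 < nu -> zeta1 nu (diagf m) L Pi <= C.
Proof.
have [C [C_ge0 resolvent_le]] := shifted_resolvent_bounded.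
set Mh := diagf (fun i => Num.sqrt (m i)); set Mih := diagf (fun i => (Num.sqrt (m i))^-1).
exists (spnorm Mh * C * spnorm Mih) => nu nu_gt0.
rewrite /zeta1 msqrt_diagf invmx_diagf => [|i]; last by rewrite sqrtr_eq0 -ltNge.
rewrite one_sub_diagf diagfC -/Q -/D -/Mh -/Mih.
apply: spnorm_le => [|x]; first by rewrite !mulr_ge0 ?spnorm_ge0.
rewrite -!mulmxA -!mulrA; apply: le_trans (vnorm_mulmx_le _ _) _.
rewrite ler_wpM2l ?spnorm_ge0 //; apply: le_trans (resolvent_le _ _ _) _.
  by rewrite sqrtr_gt0.
by rewrite ler_wpM2l ?vnorm_mulmx_le.
Qed.

End ZetaOneBounded.

Section ZetaTwoLimit.
Variables (R : realType) (n : nat) (G : 'M[R]_n).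
Hypothesis n_gt0 : (0 < n)%N.

Lemma spnorm_invmx_one_addZ_near1 a : 0 <= a -> a * spnorm G <= 1 / 2 ->
  `|1 - spnorm (invmx (1%:M + a *: G))| <= 2 * (a * spnorm G).
Proof.
set b := a * spnorm G; set E := 1%:M + a *: G => a_ge0 b_le.
have b_ge0 : 0 <= b by rewrite mulr_ge0 ?spnorm_ge0.
have aGy_le y : vnorm (a *: (G *m y)) <= b * vnorm y.
  by rewrite vnormZ ger0_norm // -mulrA ler_wpM2l ?vnorm_mulmx_le.
have Ey (y : 'cV[R]_n) : E *m y = y + a *: (G *m y) by rewrite mulmxDl mul1mx -scalemxAl.
have E_le y : vnorm (E *m y) <= (1 + b) * vnorm y.
  by rewrite Ey; apply: le_trans (vnormD _ _) _; rewrite mulrDl mul1r lerD2l.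
have E_ge y : (1 - b) * vnorm y <= vnorm (E *m y).
  have := vnormB (E *m y) (a *: (G *m y)); rewrite Ey addrK.
  by have := aGy_le y; lra.
have uE : E \in unitmx.
  apply: unitmx_ker0 => y Ey0; apply: vnorm_eq0; apply/eqP; rewrite eq_le vnorm_ge0 andbT.
  by have := E_ge y; rewrite Ey0 vnorm0; have := vnorm_ge0 y; nra.
set z := spnorm (invmx E).
have z_ge0 : 0 <= z by exact: spnorm_ge0.
have z_upper : z * (1 - b) <= 1.
  rewrite -ler_pdivlMr; last by lra.
  apply: spnorm_le => [|x]; first by rewrite divr_ge0 //; lra.
  rewrite mul1r mulrC ler_pdivlMr; last by lra.
  by rewrite mulrC; have := E_ge (invmx E *m x); rewrite mulmxA mulmxV // mul1mx.
have z_lower : 1 <= z * (1 + b).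
  pose e : 'cV[R]_n := delta_mx (Ordinal n_gt0) 0.
  have := E_le (invmx E *m e); rewrite mulmxA mulmxV // mul1mx vnorm_delta mulrC.
  move/le_trans; apply; rewrite ler_wpM2r //; first by lra.
  by have := vnorm_mulmx_le (invmx E) e; rewrite vnorm_delta mulr1.
have z_le2 : z <= 2 by nra.
by rewrite ler_norml; apply/andP; split; nra.
Qed.

Lemma spnorm_invmx_one_add_sqrtZ_cvg1 :
  (fun t => spnorm (invmx (1%:M + Num.sqrt t *: G))) @ (0 : R)^'+ --> (1 : R).
Proof.
have sqrt_cvg0 : Num.sqrt t @[t --> (0 : R)^'+] --> (0 : R).
  have : Num.sqrt t @[t --> (0 : R)] --> Num.sqrt 0 := @sqrt_continuous R 0.
  by rewrite sqrtr0 => /cvg_at_right_filter.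
apply/cvgrPdist_lt => eps eps_gt0.
set k := spnorm G; set c := Num.min (eps / 4) (1 / 2).
have k1_gt0 : 0 < k + 1 by rewrite ltr_wpDl ?spnorm_ge0.
have c_gt0 : 0 < c by rewrite lt_min; apply/andP; split; lra.
near=> t.
have a_small : Num.sqrt t * (k + 1) < c.
  by rewrite -ltr_pdivlMr //; near: t; apply: cvgr_lt sqrt_cvg0 _ _; rewrite divr_gt0.
have ak_small : Num.sqrt t * k <= c.
  by apply: ltW; apply: le_lt_trans a_small; rewrite ler_wpM2l ?sqrtr_ge0 // lerDl.
have [c_le1 c_le2] : c <= eps / 4 /\ c <= 1 / 2 by split; rewrite ge_min lexx ?orbT.
apply: le_lt_trans (spnorm_invmx_one_addZ_near1 (sqrtr_ge0 t) _) _; rewrite -/k; lra.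
Unshelve. all: by end_near.
Qed.

End ZetaTwoLimit.

Theorem proposition4p7 (R : realType) (n : nat) (nu : R) (M L Pi : 'M[R]_n) :
  (0 < n)%N -> 0 < nu ->
  is_diag_mx M -> (forall i, 0 < M i i) ->
  L \in unitmx ->
  is_diag_mx Pi -> (forall i, Pi i i = 0 \/ Pi i i = 1) ->
  [/\ (* case (i): (alpha_u, alpha_y) = (1, 0) *)
      (Shat nu M L Pi 1 0 \in unitmx ->
       forall lam : R,
         eigenvalue (invmx (Shat nu M L Pi 1 0) *m Sk nu M L Pi 1 0) lam ->
         lam <= zeta1 nu M L Pi ^+ 2 + (1 + zeta1 nu M L Pi) ^+ 2),
      (posdef (L + L^T) ->
       exists C : R, \forall nu' \near (0 : R)^'+, zeta1 nu' M L Pi <= C),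
      (* case (ii): (alpha_u, alpha_y) = (0, 1) *)
      (Shat nu M L Pi 0 1 \in unitmx ->
       forall lam : R,
         eigenvalue (invmx (Shat nu M L Pi 0 1) *m Sk nu M L Pi 0 1) lam ->
         lam <= zeta2 nu M L Pi ^+ 2 + (1 + zeta2 nu M L Pi) ^+ 2) &
      (fun nu' : R => zeta2 nu' M L Pi) @ (0 : R)^'+ --> (1 : R)].
Proof.
move=> n_gt0 nu_gt0 M_diag M_gt0 _ Pi_diag Pi01.
rewrite (diag_mx_diagf M_diag) (diag_mx_diagf Pi_diag); split.
- exact: eigenvalue_case1.
- move=> L_posdef; have [C zeta1_le] := zeta1_bounded M_gt0 Pi01 L_posdef.
  by exists C; near=> nu'; apply: zeta1_le; near: nu'; exact: nbhs_right_gt.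
- exact: eigenvalue_case2.
- under eq_fun do rewrite /zeta2 -scalemxAl.
  exact: spnorm_invmx_one_add_sqrtZ_cvg1.
Unshelve. all: by end_near.
Qed.
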